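(* For every $n\in\mathcal{N}_{z_q}$ with $n\neq 2\lambda^2$, \[ \sup_{I\subseteq S^1}\Biggl|\frac{1}{|\Gamma_{z_q,n}|}\sum_{\gamma\in\Gamma_{z_q,n}}\mathbf{1}_{\{\theta(\gamma)\in I\}}-\frac{|I|}{2\pi}\Biggr|=\sup_{I\subseteq S^1}\Biggl|\frac{1}{|\mathcal{L}_n|}\sum_{(x,y)\in\mathcal{L}_n}\mathbf{1}_{\{\arg(x+iy)\in I\}}-\frac{|I|}{2\pi}\Biggr|, \] the suprema being over arcs $I$ of $S^1=\mathbb{R}/2\pi\mathbb{Z}$ of length $|I|$.
   Context: Let $q\in\{3,4,7,8,11,19,43,67,163\}$, $z_q=\mu+i\lambda$ with $\mu=0$ if $q\in\{4,8\}$, $\mu=1/2$ otherwise, $\lambda=\sqrt q/2$. $\mathbb{H}$ is the upper half-plane with hyperbolic distance $\rho$, $\cosh\rho(z,w)=1+\frac{|z-w|^2}{2\,\mathrm{Im}(z)\mathrm{Im}(w)}$; $\Gamma=\mathrm{PSL}(2,\mathbb{Z})$; $\mathcal{R}(\gamma;z_q)=2\lambda^2\cosh\rho(z_q,\gamma z_q)$, $\mathcal{N}_{z_q}=\{\mathcal{R}(\gamma;z_q):\gamma\in\Gamma\}$, $\Gamma_{z_q,n}=\{\gamma:\mathcal{R}(\gamma;z_q)=n\}$. For $\gamma z_q\ne z_q$, $\theta(\gamma)$ is the angle that the tangent vector at $z_q$ of the geodesic segment from $z_q$ to $\gamma z_q$ makes with the positive horizontal direction. $\mathcal{L}_n=\{(x,y)\in\mathbb{R}^2: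 x^2+y^2=n^2-4\lambda^4,\ (y-n)/(2\lambda^2)\in\mathbb{Z},\ x/\lambda\in\mathbb{Z}\}$. *)

From HB Require Import structures.
From mathcomp Require Import all_boot all_order all_algebra.
From mathcomp Require Import all_classical all_reals all_analysis.
Unset Printing Implicit Defensive.
Import Order.TTheory GRing.Theory Num.Theory.
Local Open Scope ring_scope.
Local Open Scope classical_set_scope.

(* points of the upper half-plane are encoded as pairs (Re z, Im z) *)

Definition q_admissible (q : nat) : bool :=
  (q \in [:: 3; 4; 7; 8; 11; 19; 43; 67; 163])%N.

Definition mu_q (R : realType) (q : nat) : R :=
  if (q \in [:: 4; 8])%N then 0 else 1 / 2.

Definition lambda_q (R : realType) (q : nat) : R := Num.sqrt (q%:R) / 2.

Definition z_q (R : realType) (q : nat) : R * R := (mu_q R q, lambda_q R q).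

(* PSL(2,Z): integer matrices (a b; c d) of determinant 1, one representative
   per class {g, -g}, normalised by c > 0, or c = 0 and d > 0. *)
Definition PSL2Z : set (int * int * int * int) :=
  [set g | let '(a, b, c, d) := g in
           a * d - b * c = 1 /\ (0 < c \/ (c = 0 /\ 0 < d))].

(* Moebius action g z = (a z + b) / (c z + d), in real coordinates *)
Definition mobius (R : realType) (g : int * int * int * int) (z : R * R) : R * R :=
  let '(a, b, c, d) := g in
  let A : R := a%:~R in let B : R := b%:~R in
  let C : R := c%:~R in let D : R := d%:~R in
  let x := z.1 in let y := z.2 in
  let den := (C * x + D) ^+ 2 + (C * y) ^+ 2 in
  (((A * x + B) * (C * x + D) + A * C * y ^+ 2) / den, y / den).

Definition cosh_rho (R : realType) (z w : R * R) : R :=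
  1 + ((z.1 - w.1) ^+ 2 + (z.2 - w.2) ^+ 2) / (2 * z.2 * w.2).

Definition Rval (R : realType) (q : nat) (g : int * int * int * int) : R :=
  2 * lambda_q R q ^+ 2 * cosh_rho R (z_q R q) (mobius R g (z_q R q)).

Definition Nset (R : realType) (q : nat) : set R := [set Rval R q g | g in PSL2Z].

Definition Gamma_n (R : realType) (q : nat) (n : R) : set (int * int * int * int) :=
  [set g | PSL2Z g /\ Rval R q g = n].

(* A vector (positively proportional to) the initial tangent vector at z of the
   hyperbolic geodesic segment from z to w (w <> z).  It is
   i (w - z) (conj w - z) = |w - conj z|^2 * i (w - z)/(w - conj z). *)
Definition tangent_dir (R : realType) (z w : R * R) : R * R :=
  (2 * z.2 * (w.1 - z.1), (w.1 - z.1) ^+ 2 + w.2 ^+ 2 - z.2 ^+ 2).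

(* theta(gamma) as a direction vector *)
Definition theta_dir (R : realType) (q : nat) (g : int * int * int * int) : R * R :=
  tangent_dir R (z_q R q) (mobius R g (z_q R q)).

(* Arcs of S^1 = R / 2piZ: image of a real interval with endpoints lo <= hi <= lo + 2pi,
   each endpoint open or closed.  Parameters (lo, hi, lo_closed, hi_closed). *)
Definition arc_param (R : realType) : set (R * R * bool * bool) :=
  [set I | I.1.1.1 <= I.1.1.2 <= I.1.1.1 + 2 * pi].

Definition arc_len (R : realType) (I : R * R * bool * bool) : R := I.1.1.2 - I.1.1.1.

Definition arc_pts (R : realType) (I : R * R * bool * bool) : set R :=
  [set t | (if I.1.2 then I.1.1.1 <= t else I.1.1.1 < t) /\
           (if I.2 then t <= I.1.1.2 else t < I.1.1.2)].

Definition arg_in (R : realType) (v : R * R) (I : R * R * bool * bool) : Prop :=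
  exists2 t, arc_pts R I t &
    v = (Num.sqrt (v.1 ^+ 2 + v.2 ^+ 2) * cos t, Num.sqrt (v.1 ^+ 2 + v.2 ^+ 2) * sin t).

Definition L_n (R : realType) (q : nat) (n : R) : set (R * R) :=
  [set p | p.1 ^+ 2 + p.2 ^+ 2 = n ^+ 2 - 4 * lambda_q R q ^+ 4 /\
           (exists k : int, (p.2 - n) / (2 * lambda_q R q ^+ 2) = k%:~R) /\
           (exists k : int, p.1 / lambda_q R q = k%:~R)].

Definition disc_Gamma (R : realType) (q : nat) (n : R) (I : R * R * bool * bool) : R :=
  `| (\sum_(g \in Gamma_n R q n) ((`[< arg_in R (theta_dir R q g) I >])%:R : R))
       / (\sum_(g \in Gamma_n R q n) (1 : R))
     - arc_len R I / (2 * pi) |.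

Definition disc_L (R : realType) (q : nat) (n : R) (I : R * R * bool * bool) : R :=
  `| (\sum_(p \in L_n R q n) ((`[< arg_in R p I >])%:R : R))
       / (\sum_(p \in L_n R q n) (1 : R))
     - arc_len R I / (2 * pi) |.

From HB Require Import structures.
From mathcomp Require Import all_boot all_order all_algebra.
From mathcomp Require Import all_classical all_reals all_analysis.
From mathcomp Require Import zify ring lra.
Import Order.TTheory GRing.Theory Num.Theory.
Set Implicit Arguments.
Unset Strict Implicit.
Local Open Scope ring_scope.
Local Open Scope classical_set_scope.

(* For [g = (a b; c d)] of determinant 1, composing the norm form
   [Q(x, y) = |x - z_q y|^2] with [g^-1] gives an integral binary quadratic form
   [F_g = (A, B, C)] of discriminant [- q] with [A = |c z_q + d|^2 > 0].  Both
   [R(g; z_q)] and [A] times the initial direction of the geodesic from [z_q] to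
   [g z_q] are read off [F_g]; the latter is the point
   [(- lambda (2 A mu + B), n - 2 lambda^2 A)] of [L_n], with the same argument.
   For the nine admissible [q] every positive definite form of discriminant [- q]
   is equivalent to [Q] (class number one), so [Gamma_{z_q,n}] maps onto [L_n];
   the fibres are the cosets of the finite stabiliser of [Q], so every point of
   [L_n] is counted the same number of times. *)

Definition mat2 := (int * int * int * int)%type.

Definition det2 (g : mat2) : int := let '(a, b, c, d) := g in a * d - b * c.

Definition mul2 (g h : mat2) : mat2 :=
  let '(a, b, c, d) := g in let '(a', b', c', d') := h in
  (a * a' + b * c', a * b' + b * d', c * a' + d * c', c * b' + d * d').

Definition adj2 (g : mat2) : mat2 := let '(a, b, c, d) := g in (d, - b, - c, a).

Definition opp2 (g : mat2) : mat2 := let '(a, b, c, d) := g in (- a, - b, - c, - d).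

Lemma det2_mul g h : det2 (mul2 g h) = det2 g * det2 h.
Proof. by case: g h => [[[a b] c d]] [[[a' b'] c' d']] /=; ring. Qed.

Lemma det2_adj g : det2 (adj2 g) = det2 g.
Proof. by case: g => [[[a b] c d]] /=; ring. Qed.

Lemma det2_opp g : det2 (opp2 g) = det2 g.
Proof. by case: g => [[[a b] c d]] /=; ring. Qed.

Lemma opp2K : involutive opp2.
Proof. by case=> [[[a b] c d]] /=; rewrite !opprK. Qed.

Lemma mul2N g h : mul2 g (opp2 h) = opp2 (mul2 g h).
Proof. by case: g h => [[[a b] c d]] [[[a' b'] c' d']] /=; congr (_, _, _, _); ring. Qed.

Lemma mul2A g h k : mul2 g (mul2 h k) = mul2 (mul2 g h) k.
Proof.
by case: g h k => [[[a b] c d]] [[[a' b'] c' d']] [[[a'' b''] c'' d'']] /=;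
  congr (_, _, _, _); ring.
Qed.

Lemma mul_adj2 g : det2 g = 1 -> mul2 (adj2 g) g = (1, 0, 0, 1).
Proof. by case: g => [[[a b] c d]] /= <-; congr (_, _, _, _); ring. Qed.

Lemma mul2_adj g : det2 g = 1 -> mul2 g (adj2 g) = (1, 0, 0, 1).
Proof. by case: g => [[[a b] c d]] /= <-; congr (_, _, _, _); ring. Qed.

Lemma mul1_2 g : mul2 (1, 0, 0, 1) g = g.
Proof. by case: g => [[[a b] c d]] /=; congr (_, _, _, _); ring. Qed.

Lemma adj2_mulK g h : det2 g = 1 -> mul2 (adj2 g) (mul2 g h) = h.
Proof. by move=> g1; rewrite mul2A mul_adj2 // mul1_2. Qed.

Lemma mul2_adjK g h : det2 g = 1 -> mul2 g (mul2 (adj2 g) h) = h.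
Proof. by move=> g1; rewrite mul2A mul2_adj // mul1_2. Qed.

Definition psl_rep (g : mat2) : mat2 :=
  let '(a, b, c, d) := g in if (0 < c) || ((c == 0) && (0 < d)) then g else opp2 g.

Lemma psl_repE g : psl_rep g = g \/ psl_rep g = opp2 g.
Proof. by case: g => [[[a b] c d]] /=; case: ifP; [left|right]. Qed.

Lemma det2_psl_rep g : det2 (psl_rep g) = det2 g.
Proof. by case: (psl_repE g) => ->; rewrite ?det2_opp. Qed.

Lemma PSL2Z_det g : PSL2Z g -> det2 g = 1.
Proof. by case: g => [[[a b] c d]] []. Qed.

Lemma PSL2Z_psl_rep g : det2 g = 1 -> PSL2Z (psl_rep g).
Proof.
case: g => [[[a b] c d]] /= g1; case: ifP => /= [|/negbT].
  by case/orP=> [c_gt0|/andP[/eqP c_eq0 d_gt0]]; split=> //; [left|right].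
have cd0 : c = 0 -> d != 0 by move=> c_eq0; apply: contra_eq g1 => /eqP d_eq0; lia.
rewrite negb_or negb_and -!leNgt => /andP[c_le0 cd]; split; first by rewrite -g1; ring.
have [c_eq0|c_neq0] := eqVneq c 0; last by left; lia.
by right; move: (cd0 c_eq0) cd; rewrite c_eq0; lia.
Qed.

Lemma psl_rep_id g : PSL2Z g -> psl_rep g = g.
Proof.
case: g => [[[a b] c d]] /= [_ h]; case: ifP => // /negbT.
by rewrite negb_or negb_and -!leNgt; case: h => [h|[-> h]]; lia.
Qed.

Lemma psl_rep_opp g : PSL2Z g -> psl_rep (opp2 g) = g.
Proof.
case: g => [[[a b] c d]] /= [_ h]; rewrite !oppr_gt0 oppr_eq0; case: ifP.
  by case: h => [h|[-> h]]; lia.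
by rewrite !opprK.
Qed.

(** * Binary quadratic forms *)

Definition qform := (int * int * int)%type.

Definition qdisc (F : qform) : int := let '(A, B, C) := F in B ^+ 2 - 4 * A * C.

(* [(A, B, C)] encodes [A x^2 + B x y + C y^2]; [form_act F g] is [F] composed
   with the adjugate of [g], i.e. with [g^-1] when [det2 g = 1]. *)
Definition form_act (F : qform) (g : mat2) : qform :=
  let '(A, B, C) := F in let '(a, b, c, d) := g in
  (A * d ^+ 2 - B * d * c + C * c ^+ 2,
   - 2 * A * b * d + B * (a * d + b * c) - 2 * C * a * c,
   A * b ^+ 2 - B * a * b + C * a ^+ 2).

Lemma form_act1 F : form_act F (1, 0, 0, 1) = F.
Proof. by case: F => [[A B] C] /=; congr (_, _, _); ring. Qed.

Lemma form_act_mul F g h : form_act F (mul2 g h) = form_act (form_act F h) g.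
Proof.
by case: F g h => [[A B] C] [[[a b] c d]] [[[a' b'] c' d']] /=; congr (_, _, _); ring.
Qed.

Lemma form_actN F g : form_act F (opp2 g) = form_act F g.
Proof. by case: F g => [[A B] C] [[[a b] c d]] /=; congr (_, _, _); ring. Qed.

Lemma form_act_psl_rep F g : form_act F (psl_rep g) = form_act F g.
Proof. by case: (psl_repE g) => ->; rewrite ?form_actN. Qed.

Definition T2 (k : int) : mat2 := (1, k, 0, 1).

Definition S2 : mat2 := (0, -1, 1, 0).

Lemma form_act_T2 A B C k :
  form_act (A, B, C) (T2 k) = (A, B - 2 * A * k, A * k ^+ 2 - B * k + C).
Proof. by rewrite /=; congr (_, _, _); ring. Qed.

Lemma form_act_S2 A B C : form_act (A, B, C) S2 = (C, - B, A).
Proof. by rewrite /=; congr (_, _, _); ring. Qed.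

Lemma qdisc_act F g : qdisc (form_act F g) = det2 g ^+ 2 * qdisc F.
Proof. by case: F g => [[A B] C] [[[a b] c d]] /=; ring. Qed.

Lemma form_act_square A B C a b c d : let F := form_act (A, B, C) (a, b, c, d) in
  4 * A * F.1.1 = (2 * A * d - B * c) ^+ 2 - qdisc (A, B, C) * c ^+ 2 /\
  4 * A * F.2 = (2 * A * b - B * a) ^+ 2 - qdisc (A, B, C) * a ^+ 2.
Proof. by rewrite /=; split; ring. Qed.

Lemma form_act_gt0 F g : qdisc F < 0 -> 0 < F.1.1 -> det2 g = 1 ->
  0 < (form_act F g).1.1.
Proof.
case: F g => [[A B] C] [[[a b] c d]] hdisc /= hA hdet.
have [+ _] := form_act_square A B C a b c d; move: hdisc => /=.
have [c_eq0|c_neq0] := eqVneq c 0; last by nia.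
have d_neq0 : d != 0 by apply: contra_eq hdet => /eqP d_eq0; lia.
by rewrite c_eq0; nia.
Qed.

(** * Class number one for the discriminants [- q] *)

Lemma q_admissible_ind (P : nat -> Prop) :
  P 3%N -> P 4%N -> P 7%N -> P 8%N -> P 11%N -> P 19%N -> P 43%N -> P 67%N -> P 163%N ->
  forall q, q_admissible q -> P q.
Proof.
move=> h3 h4 h7 h8 h11 h19 h43 h67 h163 q; rewrite /q_admissible !inE => hq.
by repeat (case/orP: hq => [/eqP -> //|hq]); move/eqP: hq => ->.
Qed.

Lemma q_admissible_gt0 q : q_admissible q -> (0 < q)%N.
Proof. by elim/q_admissible_ind: q /. Qed.

Definition b0 (q : nat) : int := if (q \in [:: 4; 8])%N then 0 else -1.

Lemma b0_cases q : b0 q = 0 \/ b0 q = -1.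
Proof. by rewrite /b0; case: ifP; [left|right]. Qed.

Definition c0 (q : nat) : int := ((q + (q \notin [:: 4; 8])) %/ 4)%N%:Z.

(* the norm form [|x - z_q y|^2], with coefficients [1], [- 2 mu_q] and [|z_q|^2] *)
Definition principal (q : nat) : qform := (1, b0 q, c0 q).

Lemma qdisc_principal q : q_admissible q -> qdisc (principal q) = - q%:Z.
Proof. by elim/q_admissible_ind: q /. Qed.

(* A reduced form [(A, B, C)] with [A > 1] and discriminant [- q] would have
   [2 <= A <= 7], [b = |B| <= A], [4 A | b^2 + q] and [4 A^2 <= b^2 + q]. *)
Definition class_one_check (q : nat) : bool :=
  all (fun A => all (fun b => (b ^ 2 + q < 4 * A ^ 2) || ~~ (4 * A %| b ^ 2 + q))%N
                    (iota 0 A.+1))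
      (iota 2 6).

Lemma unit_form_principal q (B C : int) : q_admissible q ->
  qdisc (1, B, C) = - q%:Z -> -1 <= B < 1 -> (1, B, C) = principal q.
Proof.
move=> hq /= hdisc hB; have [eB|eB] : B = -1 \/ B = 0 by lia.
all: move: hdisc; rewrite eB /principal /b0 /c0.
all: by elim/q_admissible_ind: q / hq => hdisc /=; congr (_, _, _); lia.
Qed.

Lemma reduced_form_principal q (A B C : int) : q_admissible q ->
  qdisc (A, B, C) = - q%:Z -> 0 < A -> - A <= B < A -> A <= C -> (A, B, C) = principal q.
Proof.
move=> hq /= hdisc hA hB hAC.
have [q163 chk] : (q <= 163)%N /\ class_one_check q.
  by clear hdisc; elim/q_admissible_ind: q / hq.
have [A1|A_gt1] := eqVneq A 1.
  by subst A; apply: unit_form_principal.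
have [A' eA'] : exists A' : nat, A = A'%:Z by exists `|A|%N; lia.
have [b [eb leb]] : exists b : nat, B ^+ 2 = (b ^ 2)%N%:Z /\ (b <= A')%N.
  by exists `|B|%N; split; nia.
have [C' eC'] : exists C' : nat, C = C'%:Z by exists `|C|%N; lia.
have range : (1 < A' < 8)%N by nia.
have dvd : (4 * A' %| b ^ 2 + q)%N by apply/dvdnP; exists C'; nia.
have big : (4 * A' ^ 2 <= b ^ 2 + q)%N by nia.
have inA : A' \in iota 2 6 by rewrite mem_iota; lia.
have inb : b \in iota 0 A'.+1 by rewrite mem_iota; lia.
by move: chk => /allP/(_ A' inA)/allP/(_ b inb); rewrite ltnNge big dvd.
Qed.

Definition principal_class q (F : qform) :=
  exists2 g, det2 g = 1 & form_act (principal q) g = F.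

Lemma principal_class_act q F h :
  principal_class q F -> det2 h = 1 -> principal_class q (form_act F h).
Proof.
case=> g g1 <- h1; exists (mul2 h g); last exact: form_act_mul.
by rewrite det2_mul g1 h1 mulr1.
Qed.

Lemma principal_classP q F : q_admissible q ->
  qdisc F = - q%:Z -> 0 < F.1.1 -> principal_class q F.
Proof.
(* Gauss reduction: a translation [T2 k] brings [B] into [[- A, A)]; then either
   [A <= C] and the form is reduced, or [S2] swaps in the smaller [C]. *)
move=> hq; have q_gt0 := q_admissible_gt0 hq.
case: F => [[A B] C]; have [N] := ubnP `|A|%N.
elim: N A B C => // N IH A B C ltAN hdisc /= hA.
pose k := ((B + A) %/ (2 * A))%Z.
set B' := B - 2 * A * k; set C' := A * k ^+ 2 - B * k + C.
have back : form_act (A, B', C') (T2 (- k)) = (A, B, C).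
  by rewrite form_act_T2; congr (_, _, _); rewrite /B' /C'; ring.
rewrite -back; apply: principal_class_act; last by rewrite /=; ring.
have qdisc' : qdisc (A, B', C') = - q%:Z.
  by rewrite -form_act_T2 qdisc_act hdisc /=; ring.
have hB' : - A <= B' < A by rewrite /B' /k; lia.
have [leAC'|ltC'A] := lerP A C'.
  rewrite (reduced_form_principal hq qdisc' hA hB' leAC').
  by exists (1, 0, 0, 1); rewrite ?form_act1.
have swap : form_act (C', - B', A) S2 = (A, B', C') by rewrite form_act_S2 opprK.
rewrite -swap; apply: principal_class_act => //.
have hC' : 0 < C'.
  have := @form_act_gt0 (A, B', C') S2; rewrite form_act_S2; apply => //.
  by rewrite qdisc'; lia.
apply: IH => //; first by lia.
by rewrite -form_act_S2 qdisc_act qdisc' /=; ring.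
Qed.

Lemma finite_int_ball (N : nat) : finite_set [set k : int | `|k| <= N%:Z].
Proof.
apply: sub_finite_set (finite_image (fun i : 'I_(N.*2.+1) => i%:Z - N%:Z)
  (finite_finset (X := setT))).
move=> k /= kN; have ltkN : (absz (k + N%:Z)%R < N.*2.+1)%N by lia.
by exists (Ordinal ltkN) => //; rewrite /=; lia.
Qed.

Lemma abs_le_sqr (x : int) : `|x| <= x ^+ 2.
Proof. by nia. Qed.

Definition stab (q : nat) : set mat2 :=
  [set h | PSL2Z h /\ form_act (principal q) h = principal q].

Lemma finite_stab q : q_admissible q -> finite_set (stab q).
Proof.
move=> hq; have hdisc := qdisc_principal hq.
have b0E := b0_cases q.
have [q_ge3 c0_le] : (3 <= q)%N /\ c0 q <= q%:Z.
  by clear hdisc b0E; elim/q_admissible_ind: q / hq; rewrite /c0 /=; lia.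
have ball := finite_int_ball (4 * q).
apply: sub_finite_set (finite_setX (finite_setX (finite_setX ball ball) ball) ball).
case=> [[[a b] c d]] [_]; rewrite /principal in hdisc * => hstab.
have [] := form_act_square 1 (b0 q) (c0 q) a b c d.
rewrite hstab hdisc /= !mulr1 => e1 e2.
have qa : a ^+ 2 <= q%:Z * a ^+ 2 by apply: ler_peMl; [exact: sqr_ge0 | lia].
have qc : c ^+ 2 <= q%:Z * c ^+ 2 by apply: ler_peMl; [exact: sqr_ge0 | lia].
have := abs_le_sqr a; have := abs_le_sqr c.
have := abs_le_sqr (2 * d - b0 q * c); have := abs_le_sqr (2 * b - b0 q * a).
have := sqr_ge0 (2 * d - b0 q * c); have := sqr_ge0 (2 * b - b0 q * a).
move: e1 e2 qa qc; clear hstab hdisc.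
by case: b0E => ->; rewrite ?mul0r ?mulN1r ?subr0 ?opprK => *; do !split => /=; lia.
Qed.

Lemma finite_int_sqr_le (K : archiFieldType) (r : K) :
  finite_set [set k : int | k%:~R ^+ 2 <= r].
Proof.
apply: sub_finite_set (finite_int_ball (Num.bound `|r|)) => k /= kr.
have : (`|k|)%:~R < (Num.bound `|r|)%:R :> K.
  apply: le_lt_trans (archi_boundP (normr_ge0 r)); apply: le_trans (ler_norm r).
  apply: le_trans kr; have -> : k%:~R ^+ 2 = (k ^+ 2)%:~R :> K by rewrite !expr2 intrM.
  by rewrite ler_int abs_le_sqr.
by rewrite -[X in _ < X]/((Num.bound `|r|)%:Z%:~R) ltr_int; lia.
Qed.

(** * From matrices to lattice points *)

(* [mobius] writes [Im (g z)] as [Im z / den], dropping the factor [det g = 1];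
   restoring it makes these identities hold for all [a b c d]. *)
Lemma mobius_identities (K : realFieldType) (a b c d m l : K) :
  let den := (c * m + d) ^+ 2 + (c * l) ^+ 2 in
  let u := ((a * m + b) * (c * m + d) + a * c * l ^+ 2) / den in
  let v := l / den in
  let B := - 2 * (a * c * (m ^+ 2 + l ^+ 2) + b * d) - 2 * m * (a * d + b * c) in
  let n := (a * m + b) ^+ 2 + (a * l) ^+ 2 + B * m + den * (m ^+ 2 + l ^+ 2) in
  l != 0 -> den != 0 -> a * d - b * c = 1 ->
  [/\ 2 * l ^+ 2 * (1 + ((m - u) ^+ 2 + (l - v) ^+ 2) / (2 * l * v)) = n,
      den * (2 * l * (u - m)) = - l * (2 * den * m + B) &
      den * ((u - m) ^+ 2 + v ^+ 2 - l ^+ 2) = n - 2 * l ^+ 2 * den].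
Proof.
move=> den u v B n l0 den0 det1.
have det0 : a * d - b * c != 0 by rewrite det1 oner_eq0.
have -> : v = l * (a * d - b * c) / den by rewrite det1 mulr1.
rewrite /n /B /u /den in den0 *; split.
- by rewrite -[RHS]divr1 -[in X in _ = _ / X]det1; field; rewrite ?l0 ?den0 ?det0.
- by field; rewrite ?l0 ?den0 ?det0.
- by field; rewrite ?l0 ?den0 ?det0.
Qed.

Section LatticePoints.
Variables (R : realType) (q : nat).
Hypothesis hq : q_admissible q.

Local Notation mu := (mu_q R q).
Local Notation lambda := (lambda_q R q).
Local Notation P := (principal q).

Lemma principal_real : [/\ 0 < lambda, lambda ^+ 2 = q%:R / 4,
  (b0 q)%:~R = - 2 * mu & (c0 q)%:~R = mu ^+ 2 + lambda ^+ 2].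
Proof.
have q_gt0 := q_admissible_gt0 hq.
have l2 : lambda ^+ 2 = q%:R / 4.
  by rewrite /lambda_q expr_div_n sqr_sqrtr ?ler0n //; congr (_ / _); lra.
have b0R : (b0 q)%:~R = - 2 * mu by rewrite /b0 /mu_q; case: ifP => _ /=; lra.
split => //; first by rewrite divr_gt0 // sqrtr_gt0 ltr0n.
have /(congr1 (fun z : int => z%:~R : R)) := qdisc_principal hq.
by rewrite /= expr2 intrB !intrM intrN b0R l2 (_ : (q%:Z)%:~R = q%:R) //; lra.
Qed.

Lemma principal_act_real a b c d : let F := form_act P (a, b, c, d) in
  [/\ F.1.1%:~R = (c%:~R * mu + d%:~R) ^+ 2 + (c%:~R * lambda) ^+ 2 :> R,
      F.1.2%:~R = - 2 * (a%:~R * c%:~R * (mu ^+ 2 + lambda ^+ 2) + b%:~R * d%:~R)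
                  - 2 * mu * (a%:~R * d%:~R + b%:~R * c%:~R) :> R &
      F.2%:~R = (a%:~R * mu + b%:~R) ^+ 2 + (a%:~R * lambda) ^+ 2 :> R].
Proof.
have [_ _ b0R c0R] := principal_real.
by rewrite /= !expr2 !(intrD, intrB, intrM, intrN) b0R c0R; split; ring.
Qed.

Definition level (F : qform) : R :=
  F.2%:~R + F.1.2%:~R * mu + F.1.1%:~R * (mu ^+ 2 + lambda ^+ 2).

Definition lattice_point (n : R) (F : qform) : R * R :=
  (- lambda * (2 * F.1.1%:~R * mu + F.1.2%:~R), n - 2 * lambda ^+ 2 * F.1.1%:~R).

Lemma det2_real (a b c d : int) : det2 (a, b, c, d) = 1 ->
  a%:~R * d%:~R - b%:~R * c%:~R = 1 :> R.
Proof. by move=> /(congr1 (fun z : int => z%:~R : R)); rewrite intrB !intrM. Qed.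

Lemma principal_act_den a b c d : det2 (a, b, c, d) = 1 ->
  (c%:~R * mu + d%:~R) ^+ 2 + (c%:~R * lambda) ^+ 2 != 0 :> R.
Proof.
have [eA _ _] := principal_act_real a b c d; rewrite -eA intr_eq0 => det1.
have q_gt0 := q_admissible_gt0 hq.
by apply: lt0r_neq0; apply: form_act_gt0 => //; rewrite qdisc_principal //; lia.
Qed.

Lemma Rval_level g : det2 g = 1 -> Rval R q g = level (form_act P g).
Proof.
case: g => [[[a b] c d]] det1; have [l_gt0 _ _ _] := principal_real.
have [e _ _] := mobius_identities (lt0r_neq0 l_gt0) (principal_act_den det1) (det2_real det1).
have [eA eB eC] := principal_act_real a b c d.
by rewrite /Rval /cosh_rho /mobius /z_q /= e /level eA eB eC.
Qed.

Lemma theta_dir_lattice_point g : det2 g = 1 ->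
  ((form_act P g).1.1%:~R * (theta_dir R q g).1,
   (form_act P g).1.1%:~R * (theta_dir R q g).2) =
  lattice_point (Rval R q g) (form_act P g).
Proof.
move=> det1; rewrite (Rval_level det1); case: g det1 => [[[a b] c d]] det1.
have [l_gt0 _ _ _] := principal_real.
have [_ e1 e2] := mobius_identities (lt0r_neq0 l_gt0) (principal_act_den det1) (det2_real det1).
have [eA eB eC] := principal_act_real a b c d.
rewrite /theta_dir /tangent_dir /mobius /z_q /lattice_point /level /= eA eB eC.
by rewrite e1 e2; congr (_, _); ring.
Qed.

Lemma qdisc_real F : qdisc F = - q%:Z ->
  F.1.2%:~R ^+ 2 - 4 * F.1.1%:~R * F.2%:~R = - 4 * lambda ^+ 2 :> R.
Proof.
have [_ l2 _ _] := principal_real.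
case: F => [[A B] C] /= /(congr1 (fun z : int => z%:~R : R)).
by rewrite l2 !expr2 intrB !intrM intrN (_ : (q%:Z)%:~R = q%:R) // => ->; lra.
Qed.

Definition residual (n : R) (A B : int) : R := n - B%:~R * mu - A%:~R * (mu ^+ 2 + lambda ^+ 2).

Lemma lattice_point_norm n F :
  (lattice_point n F).1 ^+ 2 + (lattice_point n F).2 ^+ 2 - (n ^+ 2 - 4 * lambda ^+ 4) =
  lambda ^+ 2 * (F.1.2%:~R ^+ 2 - 4 * F.1.1%:~R * residual n F.1.1 F.1.2 + 4 * lambda ^+ 2).
Proof. by rewrite /= /residual; ring. Qed.

Lemma residual_level F : residual (level F) F.1.1 F.1.2 = F.2%:~R.
Proof. by rewrite /residual /level; ring. Qed.

Lemma level_gt0 F : qdisc F = - q%:Z -> 0 < F.1.1 -> 0 < level F.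
Proof.
move=> /qdisc_real hd hA; have [l_gt0 _ _ _] := principal_real.
have hAR : 0 < F.1.1%:~R :> R by rewrite ltr0z.
have h4 : 4 * F.1.1%:~R * level F = (F.1.2%:~R + 2 * F.1.1%:~R * mu) ^+ 2
    + 4 * lambda ^+ 2 * (1 + F.1.1%:~R ^+ 2) :> R.
  by rewrite /level; lra.
have : 0 < 4 * F.1.1%:~R * level F :> R.
  rewrite h4; have := sqr_ge0 (F.1.2%:~R + 2 * F.1.1%:~R * mu).
  have := sqr_ge0 (F.1.1%:~R : R); have := exprn_gt0 2 l_gt0; nra.
by rewrite pmulr_rgt0 // mulr_gt0.
Qed.

Lemma lattice_point_L F : qdisc F = - q%:Z -> L_n R q (level F) (lattice_point (level F) F).
Proof.
move=> hdisc; have [l_gt0 _ b0R _] := principal_real; have l0 := lt0r_neq0 l_gt0.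
split; [|split].
- apply/eqP; rewrite -subr_eq0 lattice_point_norm residual_level.
  have -> : F.1.2%:~R ^+ 2 - 4 * F.1.1%:~R * F.2%:~R + 4 * lambda ^+ 2 = 0 :> R.
    by rewrite qdisc_real //; ring.
  by rewrite mulr0.
- by exists (- F.1.1); rewrite /= intrN; field; rewrite l0.
- by exists (F.1.1 * b0 q - F.1.2); rewrite /= intrB intrM b0R; field.
Qed.

Lemma lattice_point_inj n F F' : qdisc F = - q%:Z -> qdisc F' = - q%:Z -> 0 < F.1.1 ->
  lattice_point n F = lattice_point n F' -> F = F'.
Proof.
case: F F' => [[A B] C] [[A' B'] C'] /= hd hd' hA [ex ey].
have [l_gt0 _ _ _] := principal_real.
have eA : A = A'.
  apply: (@intr_inj R); apply: (@mulfI _ (2 * lambda ^+ 2)); last by lra.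
  by rewrite mulf_neq0 ?expf_neq0 ?lt0r_neq0.
have eB : B = B'.
  apply: (@intr_inj R); apply: (@mulfI _ (- lambda)); last by rewrite eA in ex; lra.
  by rewrite oppr_eq0 lt0r_neq0.
by rewrite -eA -eB in hd' *; congr (_, _, _); nia.
Qed.

Definition lattice_map (n : R) (g : mat2) : R * R := lattice_point n (form_act P g).

Lemma Gamma_n_form n g : Gamma_n R q n g ->
  [/\ det2 g = 1, 0 < (form_act P g).1.1, qdisc (form_act P g) = - q%:Z &
      level (form_act P g) = n].
Proof.
case=> hg <-; have g1 := PSL2Z_det hg; rewrite Rval_level //.
have hdisc : qdisc (form_act P g) = - q%:Z.
  by rewrite qdisc_act g1 qdisc_principal // expr1n mul1r.
split => //; apply: form_act_gt0 => //.
by rewrite qdisc_principal // oppr_lt0 ltz_nat q_admissible_gt0.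
Qed.

Lemma Nset_level n : Nset R q n ->
  exists F, [/\ 0 < F.1.1, qdisc F = - q%:Z & level F = n].
Proof.
case=> g hg gn; have [_ A_gt0 hdisc hn] := @Gamma_n_form n g (conj hg gn).
by exists (form_act P g).
Qed.

Lemma int_sqr_parity (x : int) : exists k, x ^+ 2 = x + 2 * k.
Proof.
have [r0|r1] : (x %% 2)%Z = 0 \/ (x %% 2)%Z = 1 by lia.
all: exists (2 * (x %/ 2)%Z ^+ 2 + 2 * (x %/ 2)%Z * (x %% 2)%Z - (x %/ 2)%Z).
all: by rewrite {1 2}(divz_eq x 2) ?r0 ?r1; ring.
Qed.

Lemma residual_int n A B : Nset R q n ->
  B%:~R ^+ 2 - 4 * A%:~R * residual n A B + 4 * lambda ^+ 2 = 0 :> R ->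
  exists C : int, residual n A B = C%:~R.
Proof.
case/Nset_level=> -[[A1 B1] C1] [_ /= hd1 <-] e.
have [_ l2 b0R c0R] := principal_real.
have b0E := b0_cases q.
set X := C1 + (A1 - A) * c0 q.
have resE : residual (level (A1, B1, C1)) A B = X%:~R - ((B1 - B) * b0 q)%:~R / 2.
  by rewrite /residual /level /X /= !(intrD, intrB, intrM) b0R c0R; field.
have hint : 4 * A * X - 2 * A * ((B1 - B) * b0 q) = B ^+ 2 + q%:Z.
  apply: (@intr_inj R); move: e; rewrite resE !(intrD, intrB, intrM) l2.
  by rewrite (_ : (q%:Z)%:~R = q%:R) // !expr2; lra.
(* [B] and [B1] both have the parity of [q], so [(B1 - B) b0] is even *)
have [s sE] := int_sqr_parity B; have [s1 s1E] := int_sqr_parity B1.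
set t := (B1 - B) * b0 q in resE hint *.
have even : t = 2 * (t %/ 2)%Z by rewrite /t; case: b0E => hb0; rewrite hb0 in hint *; lia.
exists (X - (t %/ 2)%Z).
by rewrite resE {1}even !(intrB, intrM); field.
Qed.

Lemma L_n_lattice_point n p : Nset R q n -> L_n R q n p ->
  exists F, [/\ 0 < F.1.1, qdisc F = - q%:Z, level F = n & lattice_point n F = p].
Proof.
move=> hn [hp [[k1 hk1] [k2 hk2]]].
have [l_gt0 l2 b0R _] := principal_real; have l0 := lt0r_neq0 l_gt0.
set A := - k1; set B := A * b0 q - k2.
have pE : p = lattice_point n (A, B, 0).
  case: p hp hk1 hk2 => x y /= _ hk1 hk2; rewrite /lattice_point /= /B /A.
  by rewrite !(intrB, intrM, intrN) b0R -hk1 -hk2; congr (_, _); field; rewrite ?l0.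
have circle : B%:~R ^+ 2 - 4 * A%:~R * residual n A B + 4 * lambda ^+ 2 = 0 :> R.
  have := lattice_point_norm n (A, B, 0); rewrite -pE hp subrr.
  by move/esym/eqP; rewrite mulf_eq0 expf_eq0 (negbTE l0) /= => /eqP.
have [C resC] := residual_int hn circle.
have [F [F_gt0 F_disc F_n]] := Nset_level hn.
have n_gt0 : 0 < n by rewrite -F_n level_gt0.
have A_gt0 : 0 < A.
  have : 4 * A%:~R * n = (B%:~R + 2 * A%:~R * mu) ^+ 2 + 4 * lambda ^+ 2 * (1 + A%:~R ^+ 2) :> R.
    by move: circle; rewrite /residual; lra.
  have := sqr_ge0 (B%:~R + 2 * A%:~R * mu); have := sqr_ge0 (A%:~R : R).
  have := exprn_gt0 2 l_gt0; rewrite -(ltr0z R); nra.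
exists (A, B, C); split => //=.
- apply: (@intr_inj R); move: circle; rewrite resC l2 !expr2 !(intrB, intrM, intrN).
  by rewrite (_ : (q%:Z)%:~R = q%:R) //; lra.
- by rewrite /level /= -resC /residual; ring.
Qed.

Lemma lattice_map_L n g : Gamma_n R q n g -> L_n R q n (lattice_map n g).
Proof. by case/Gamma_n_form=> _ _ hdisc <-; exact: lattice_point_L. Qed.

Lemma lattice_map_surj n p : Nset R q n -> L_n R q n p ->
  exists2 g, Gamma_n R q n g & lattice_map n g = p.
Proof.
move=> hn hp; have [F [F_gt0 F_disc F_n pE]] := L_n_lattice_point hn hp.
have [g g1 gF] := principal_classP hq F_disc F_gt0.
exists (psl_rep g); last by rewrite /lattice_map form_act_psl_rep gF.
split; first exact: PSL2Z_psl_rep.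
by rewrite Rval_level ?det2_psl_rep // form_act_psl_rep gF.
Qed.

Lemma lattice_map_inj n g g' : Gamma_n R q n g -> Gamma_n R q n g' ->
  lattice_map n g = lattice_map n g' -> form_act P g = form_act P g'.
Proof. by case/Gamma_n_form=> _ ? ? _ /Gamma_n_form[_ _ ? _]; apply: lattice_point_inj. Qed.

Lemma finite_L n : finite_set (L_n R q n).
Proof.
have [l_gt0 _ _ _] := principal_real; have l0 := lt0r_neq0 l_gt0.
have l2_gt0 : 0 < lambda ^+ 2 by rewrite exprn_gt0.
have l4_gt0 : 0 < lambda ^+ 4 by rewrite exprn_gt0.
apply: sub_finite_set (finite_image
  (fun k : int * int => (lambda * k.1%:~R, n + 2 * lambda ^+ 2 * k.2%:~R))
  (finite_setX (finite_int_sqr_le (n ^+ 2 / lambda ^+ 2))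
               (finite_int_sqr_le (n ^+ 2 / lambda ^+ 4)))).
case=> x y [/= hp [[k1 hk1] [k2 hk2]]].
have ex : x = lambda * k2%:~R by rewrite -hk2; field.
have ey : y = n + 2 * lambda ^+ 2 * k1%:~R by rewrite -hk1; field.
exists (k2, k1); last by rewrite /= -ex -ey.
have := sqr_ge0 x; have := sqr_ge0 (y + n); have := exprn_gt0 4 l_gt0.
split; rewrite /= ler_pdivlMr //.
- by move: hp; rewrite ex exprMn; nra.
- have -> : lambda ^+ 4 = lambda ^+ 2 * lambda ^+ 2 by rewrite -exprD.
  by move: hp; rewrite ey; nra.
Qed.

(** * Counting the fibres *)

Definition lattice_fiber (n : R) (p : R * R) : set mat2 :=
  [set g | Gamma_n R q n g /\ lattice_map n g = p].

Definition fiber_rep (n : R) (p : R * R) : mat2 := xget (0, 0, 0, 0) (lattice_fiber n p).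

Lemma fiber_rep_spec n p : Nset R q n -> L_n R q n p -> lattice_fiber n p (fiber_rep n p).
Proof.
move=> hn hp; apply: xgetPex.
by have [g hg gp] := lattice_map_surj hn hp; exists g.
Qed.

Definition fiber_map (n : R) (x : (R * R) * mat2) : mat2 := psl_rep (mul2 (fiber_rep n x.1) x.2).

Lemma fiber_map_spec n p h : Nset R q n -> L_n R q n p -> stab q h ->
  Gamma_n R q n (fiber_map n (p, h)) /\ lattice_map n (fiber_map n (p, h)) = p.
Proof.
move=> hn hp [h_psl hP]; have [[r_psl r_n] r_p] := fiber_rep_spec hn hp.
have det1 : det2 (mul2 (fiber_rep n p) h) = 1 by rewrite det2_mul !PSL2Z_det ?mulr1.
have formE : form_act P (fiber_map n (p, h)) = form_act P (fiber_rep n p).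
  by rewrite /fiber_map form_act_psl_rep form_act_mul hP.
split; last by rewrite /lattice_map formE.
split; first exact: PSL2Z_psl_rep.
by rewrite Rval_level ?det2_psl_rep // formE -Rval_level ?PSL2Z_det.
Qed.

Lemma fiber_map_bij n : Nset R q n -> set_bij (L_n R q n `*` stab q) (Gamma_n R q n) (fiber_map n).
Proof.
move=> hn; split.
- by case=> p h [/= hp hh]; have [] := fiber_map_spec hn hp hh.
- case=> p h [p' h'] /set_mem[/= hp hh] /set_mem[/= hp' hh'] e.
  have ep : p = p' by rewrite -(fiber_map_spec hn hp hh).2 -(fiber_map_spec hn hp' hh').2 e.
  subst p'; congr (_, _); move: e; rewrite /fiber_map /=; set r := fiber_rep n p => e.
  have r1 : det2 r = 1 by apply: PSL2Z_det; have [[]] := fiber_rep_spec hn hp.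
  case: hh hh' => [h_psl _] [h'_psl _].
  have [rh|rh] : mul2 r h = mul2 r h' \/ mul2 r h = opp2 (mul2 r h').
    case: (psl_repE (mul2 r h)) e => ->; case: (psl_repE (mul2 r h')) => -> e.
    + by left.
    + by right.
    + by right; rewrite -e opp2K.
    + by left; rewrite -[LHS]opp2K e opp2K.
    by rewrite -(adj2_mulK h r1) rh adj2_mulK.
  have hh : h = opp2 h' by rewrite -(adj2_mulK h r1) rh -mul2N adj2_mulK.
  by rewrite -(psl_rep_id h_psl) hh psl_rep_opp.
- move=> g hg; set p := lattice_map n g; have hp : L_n R q n p := lattice_map_L hg.
  have [r_Gamma r_p] := fiber_rep_spec hn hp; set r := fiber_rep n p in r_Gamma r_p *.
  have r1 := PSL2Z_det r_Gamma.1; have g1 := PSL2Z_det hg.1.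
  have rg : form_act P r = form_act P g := lattice_map_inj r_Gamma hg r_p.
  exists (p, psl_rep (mul2 (adj2 r) g)).
    split => //; split; first by apply: PSL2Z_psl_rep; rewrite det2_mul det2_adj r1 g1.
    by rewrite form_act_psl_rep form_act_mul -rg -form_act_mul mul_adj2 // form_act1.
  rewrite /fiber_map /= -/r; case: (psl_repE (mul2 (adj2 r) g)) => ->.
    by rewrite mul2_adjK // (psl_rep_id hg.1).
  by rewrite mul2N mul2_adjK // (psl_rep_opp hg.1).
Qed.

Lemma stab_card_gt0 : 0 < \sum_(h \in stab q) (1 : R).
Proof.
have h1 : stab q (1, 0, 0, 1) by split; [split=> //; right | exact: form_act1].
rewrite (fsbigD1 (1, 0, 0, 1)) //; last exact: finite_stab.
by rewrite ltr_pwDl // fsumr_ge0.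
Qed.

Lemma sum_Gamma_n n (f : R * R -> R) : Nset R q n ->
  \sum_(g \in Gamma_n R q n) f (lattice_map n g) =
  (\sum_(p \in L_n R q n) f p) * \sum_(h \in stab q) (1 : R).
Proof.
move=> hn; rewrite (@reindex_fsbig _ _ _ _ _ (fiber_map n) _ _ _ (fiber_map_bij hn)).
rewrite (eq_fsbigr (fun x => f x.1)); last first.
  by case=> p h /set_mem[/= hp hh]; rewrite (fiber_map_spec hn hp hh).2.
transitivity (\sum_(p \in L_n R q n) \sum_(h \in stab q) f p).
  by rewrite pair_fsbig //; [exact: finite_L | exact: finite_stab].
rewrite mulr_fsuml; apply: eq_fsbigr => p _.
by rewrite mulr_fsumr; apply: eq_fsbigr => h _; rewrite mulr1.
Qed.

Lemma arg_in_scale (v : R * R) (k : R) I : 0 < k ->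
  arg_in R (k * v.1, k * v.2) I <-> arg_in R v I.
Proof.
case: v => x y k_gt0; rewrite /arg_in /=; have k0 := lt0r_neq0 k_gt0.
have -> : Num.sqrt ((k * x) ^+ 2 + (k * y) ^+ 2) = k * Num.sqrt (x ^+ 2 + y ^+ 2).
  rewrite -[in RHS](gtr0_norm k_gt0) -sqrtr_sqr -sqrtrM ?sqr_ge0 //.
  by congr Num.sqrt; ring.
split=> -[t It /pair_equal_spec[ex ey]]; exists t => //; congr (_, _).
- by apply: (mulfI k0); rewrite ex mulrA.
- by apply: (mulfI k0); rewrite ey mulrA.
- by rewrite {1}ex mulrA.
- by rewrite {1}ey mulrA.
Qed.

Lemma disc_Gamma_L n I : Nset R q n -> disc_Gamma R q n I = disc_L R q n I.
Proof.
move=> hn; rewrite /disc_Gamma /disc_L.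
have arg_lattice g : Gamma_n R q n g ->
    `[< arg_in R (theta_dir R q g) I >] = `[< arg_in R (lattice_map n g) I >].
  case/Gamma_n_form=> g1 A_gt0 _ gn.
  rewrite /lattice_map -gn -(Rval_level g1) -(theta_dir_lattice_point g1).
  by apply: asbool_equiv_eq; apply: iff_sym; apply: arg_in_scale; rewrite ltr0z.
rewrite (eq_fsbigr (fun g => (`[< arg_in R (lattice_map n g) I >])%:R)); last first.
  by move=> g /set_mem hg; rewrite arg_lattice.
rewrite (sum_Gamma_n (fun p => (`[< arg_in R p I >])%:R) hn) (sum_Gamma_n (fun=> 1) hn).
by rewrite -mulf_div divff ?mulr1 // gt_eqF // stab_card_gt0.
Qed.

End LatticePoints.

Unset Implicit Arguments.

Theorem corollary2p7 (R : realType) (q : nat) (n : R) :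
  q_admissible q -> Nset R q n -> n != 2 * lambda_q R q ^+ 2 ->
  sup [set disc_Gamma R q n I | I in arc_param R] =
  sup [set disc_L R q n I | I in arc_param R].
Proof.
move=> hq hn _.
suff -> : disc_Gamma R q n = disc_L R q n by [].
by apply: funext => I; exact: disc_Gamma_L.
Qed.
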